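(* Let $X=X(\Delta)$ be a nonsingular toric variety of dimension $n$ with tangent bundle $T_X$. Then $T_X$ splits (i.e. is $T$-equivariantly isomorphic to a direct sum of toric line bundles) if and only if for every $n$-dimensional cone $\sigma\in\Delta(n)$ and every ray $\rho\in\Delta(1)\setminus\sigma(1)$, the primitive ray generator $v_\rho$ of $\rho$ is the negative of some primitive ray generator of $\sigma$.
   Context: $\Delta(1)$ denotes the set of rays of the fan $\Delta$, $\Delta(n)$ the set of $n$-dimensional cones, and $\sigma(1)$ the set of rays of a cone $\sigma$. The tangent bundle $T_X$ carries its natural torus-equivariant structure; in Klyachko's description it corresponds to $E=N_{\mathbb{C}}$ with filtrations $E^{\rho}(i)=N_{\mathbb{C}}$ for $i\le 0$, $E^{\rho}(1)=\mathrm{Span}(v_\rho)$, $E^{\rho}(i)=0$ for $i>1$.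
   Formalization: The equivalence is stated only for fans Δ with at least one n-dimensional cone, that is with Δ(n) ≠ ∅. The statement above fails without it. *)

From HB Require Import structures.
From mathcomp Require Import all_boot all_order all_algebra.
Set Implicit Arguments. Unset Strict Implicit. Unset Printing Implicit Defensive.
Import Order.TTheory GRing.Theory Num.Theory.
Local Open Scope ring_scope.

(* Rays of the fan are indexed
   by a finite type I, ray rho having primitive generator v rho.  A cone of a
   nonsingular fan is determined by its set of rays sigma(1) : {set I}; the
   fan Delta is the set D : {set {set I}} of these ray sets. *)

Section Fan.
Variables (n : nat) (I : finType) (v : I -> 'rV[int]_n).

Definition vQ (i : I) : 'rV[rat]_n := map_mx (fun z : int => z%:~R) (v i).

Definition cone (S : {set I}) (x : 'rV[rat]_n) : Prop :=
  exists c : I -> rat, (forall i, 0 <= c i) /\ (forall i, i \notin S -> c i = 0)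
    /\ x = \sum_i c i *: vQ i.

Definition primitive (w : 'rV[int]_n) : Prop :=
  forall (k : int) (u : 'rV[int]_n), w = k *: u -> k = 1 \/ k = -1.

Definition unimodular (S : {set I}) : Prop :=
  exists B : 'M[int]_n, (\det B = 1 \/ \det B = -1) /\
    exists f : I -> 'I_n, {in S &, injective f} /\
      forall i, i \in S -> row (f i) B = v i.

Definition smooth_fan (D : {set {set I}}) : Prop :=
  [/\ injective v /\ (forall i, primitive (v i)),
      forall i, [set i] \in D,
      forall S T : {set I}, S \in D -> T \subset S -> T \in D,
      forall S : {set I}, S \in D -> unimodular S &
      forall S T : {set I}, S \in D -> T \in D ->
        forall x, cone S x -> cone T x -> cone (S :&: T) x].

(* Klyachko data of T_X: E = N_C, E^rho(i) = N_C (i<=0), Span(v_rho) (i=1),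
   0 (i>1); subspaces are row spaces of square matrices (%MS). *)
Definition tangent_filt (C : numClosedFieldType) (rho : I) (i : int) : 'M[C]_n :=
  if i <= 0 then 1%:M
  else if i == 1 then (<< map_mx (fun z : int => z%:~R) (v rho) >>)%MS
  else 0.

(* Klyachko data of a direct sum of r toric line bundles L_1,...,L_r, where
   L_j has filtrations L_j^rho(i) = C for i <= a j rho and 0 for i > a j rho:
   E = C^r, E^rho(i) = span of the e_j with i <= a j rho. *)
Definition linesum_filt (C : numClosedFieldType) (r : nat) (a : 'I_r -> I -> int)
  (rho : I) (i : int) : 'M[C]_r :=
  diag_mx (\row_(j < r) ((i <= a j rho)%R)%:R).

(* T_X splits: it is isomorphic (as filtered vector spaces, i.e. as
   T-equivariant bundles via Klyachko) to a direct sum of toric line bundles. *)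
Definition tangent_splits (C : numClosedFieldType) : Prop :=
  exists (r : nat) (a : 'I_r -> I -> int) (A : 'M[C]_(n, r)),
    [/\ row_free A, row_full A &
        forall rho i, (tangent_filt C rho i *m A == linesum_filt C a rho i)%MS].

End Fan.

From HB Require Import structures.
From mathcomp Require Import all_boot all_order all_algebra.
From mathcomp Require Import zify.
Import Order.TTheory GRing.Theory Num.Theory.
Local Open Scope ring_scope.
Set Implicit Arguments.
Unset Strict Implicit.

(* A splitting of T_X is an isomorphism A : N_C -> C^r under which every ray
   line Span(v_rho), the i = 1 step of the filtrations, becomes a coordinate
   line C e_j.  If sigma is a maximal cone, its generators v_i form a Z-basis
   of N; as the image of v_rho has a nonzero j-th coordinate, so does the
   image of some v_i, and both images lie on C e_j.  Hence v_rho is a complex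
   multiple of v_i, the factor is an integer (a coordinate of v_rho in the
   basis), and primitivity makes it 1 or -1, where 1 is excluded for rho
   outside sigma.  Conversely, if every v_rho is +-v_i for one maximal cone,
   taking coordinates in the basis (v_i) splits all filtrations at once. *)

Section CoordinateLines.
Variable F : fieldType.

Lemma eqmx_diag_rV_delta r (w d : 'rV[F]_r) k :
  (w == diag_mx d)%MS -> w 0 k != 0 -> w = w 0 k *: 'e_k.
Proof.
case/andP=> /submxP[x wE] /(submx_trans (row_sub k _)).
rewrite row_diag_mx => /sub_rVP[c dkE] wk0.
have dk0 : d 0 k != 0.
  by apply: contraNneq wk0; rewrite wE mul_mx_diag mxE => ->; rewrite mulr0.
have c0 : c != 0.
  apply: contraNneq dk0 => c0; move/rowP/(_ k): dkE.
  by rewrite c0 scale0r !mxE !eqxx mulr1 => ->.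
have {}wE : w = (d 0 k / c) *: 'e_k.
  by rewrite mulrC -scalerA dkE scalerA mulVf ?scale1r.
by rewrite {1}wE; congr (_ *: _); rewrite wE !mxE !eqxx mulr1.
Qed.

Lemma eqmx_delta_rV_mx n (k : 'I_n) :
  (('e_k : 'rV[F]_n) :=: (delta_mx k k : 'M[F]_n))%MS.
Proof.
apply/eqmxP/andP; split; apply/submxP.
  by exists (delta_mx 0 k); rewrite mul_delta_mx.
by exists (delta_mx k 0); rewrite mul_delta_mx.
Qed.

Lemma unitmx_row_mul_neq0 m p (M : 'M[F]_m) (A : 'M_(m, p)) (u : 'rV_m) j :
  M \in unitmx -> (u *m A) 0 j != 0 -> exists l, (row l M *m A) 0 j != 0.
Proof.
move=> unitM uj0.
have [l | col0] := pickP (fun l => (row l M *m A) 0 j != 0); first by exists l.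
have MA0 : M *m (A *m (delta_mx j 0 : 'cV_p)) = 0.
  apply/colP => l; move/negbFE/eqP: (col0 l).
  by rewrite mulmxA -colE -row_mul !mxE.
have A0 : A *m (delta_mx j 0 : 'cV_p) = 0.
  by rewrite -(mulKmx unitM (A *m _)) MA0 mulmx0.
have : (u *m A) 0 j = (u *m (A *m (delta_mx j 0 : 'cV_p))) 0 0.
  by rewrite mulmxA -colE [RHS]mxE.
by rewrite A0 mulmx0 [RHS]mxE => /eqP; rewrite (negbTE uj0).
Qed.

End CoordinateLines.

Section IntegralBasis.
Variables (R : numFieldType) (n : nat) (B : 'M[int]_n).
Hypothesis unitB : B \in unitmx.
Local Notation intrmx := (map_mx (fun z : int => z%:~R : R)).

Lemma intrmx_inj m p : injective (intrmx : 'M_(m, p) -> 'M_(m, p)).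
Proof.
move=> X Y /matrixP XY; apply/matrixP => i j.
by have := XY i j; rewrite !mxE => /intr_inj.
Qed.

Lemma intrmx_unit : intrmx B \in unitmx.
Proof.
move: unitB; rewrite !unitmxE (det_map_mx (intr : {rmorphism int -> R})).
exact: rmorph_unit.
Qed.

Lemma intrmx_eq_scale_row (u : 'rV[int]_n) k (c : R) :
  intrmx u = c *: intrmx (row k B) -> exists t : int, u = t *: row k B.
Proof.
move=> uE; exists ((u *m invmx B) 0 k).
have ct : c = ((u *m invmx B) 0 k)%:~R.
  have := congr1 (fun X => (X *m intrmx (invmx B)) 0 k) uE.
  rewrite /= -scalemxAl -!(map_mxM (intr : {rmorphism int -> R})).
  rewrite -row_mul mulmxV // row1.
  by rewrite !mxE !eqxx mulr1 => ->.
by apply: intrmx_inj; rewrite uE ct (map_mxZ (intr : {rmorphism int -> R})).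
Qed.

End IntegralBasis.

Section SplitTangent.
Variables (C : numClosedFieldType) (n : nat) (I : finType) (v : I -> 'rV[int]_n).
Local Notation intrmx := (map_mx (fun z : int => z%:~R : C)).
Local Notation vC rho := (intrmx (v rho)).

Lemma primitive_neq0 (w : 'rV[int]_n) : primitive w -> w != 0.
Proof.
move=> primw; apply/eqP=> w0.
by have := primw 2 w; rewrite w0 scaler0; case=> // /eqP.
Qed.

Lemma unimodular_basis_rows (s : {set I}) : unimodular v s -> #|s| = n ->
  exists B : 'M[int]_n, [/\ B \in unitmx,
    forall k, exists2 i, i \in s & v i = row k B &
    forall i, i \in s -> exists k, v i = row k B].
Proof.
move=> [B [detB [f [injf fB]]]] card_s; exists B; split.
- by rewrite unitmxE; case: detB => ->; rewrite ?unitrN1 ?unitr1.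
- have fs : f @: s = setT.
    apply/eqP; rewrite eqEcard subsetT cardsT card_ord /=.
    by rewrite (card_in_imset injf) card_s.
  move=> k; have /imsetP[i i_s ->] : k \in f @: s by rewrite fs inE.
  by exists i; rewrite ?fB.
- by move=> i i_s; exists (f i); rewrite fB.
Qed.

Lemma ray_collinear_basis_row r (a : 'I_r -> I -> int) (A : 'M[C]_(n, r))
    (B : 'M[int]_n) rho :
  row_free A -> (forall rho, (vC rho *m A == linesum_filt C a rho 1)%MS) ->
  B \in unitmx -> (forall k, exists i, v i = row k B) -> v rho != 0 ->
  exists l (c : C), vC rho = c *: intrmx (row l B).
Proof.
move=> freeA lineA unitB rowsB vrho0.
have : vC rho *m A != 0.
  rewrite mulmx_free_eq0 //; apply: contraNneq vrho0 => vC0.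
  by apply/eqP; apply: (@intrmx_inj C); rewrite vC0 map_mx0.
case/rV0Pn=> j rhoj.
have [l lj] := unitmx_row_mul_neq0 (intrmx_unit C unitB) rhoj.
have [i vi] := rowsB l.
rewrite -map_row -vi in lj.
have rhoE := eqmx_diag_rV_delta (lineA rho) rhoj.
have iE := eqmx_diag_rV_delta (lineA i) lj.
exists l, ((vC rho *m A) 0 j / (vC i *m A) 0 j); rewrite -vi.
apply: (row_free_inj freeA); rewrite -scalemxAl {1}rhoE {2}iE scalerA divfK //.
Qed.

Lemma linesum_rays_opposite_cone_rays (s : {set I}) r (a : 'I_r -> I -> int)
    (A : 'M[C]_(n, r)) :
  injective v -> (forall i, primitive (v i)) -> unimodular v s -> #|s| = n ->
  row_free A -> (forall rho, (vC rho *m A == linesum_filt C a rho 1)%MS) ->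
  forall rho, rho \notin s -> exists rho', rho' \in s /\ v rho = - v rho'.
Proof.
move=> injv primv unimod_s card_s freeA lineA rho rho_s.
have [B [unitB rowsB _]] := unimodular_basis_rows unimod_s card_s.
have rays_rowsB k : exists i, v i = row k B by have [i _ vi] := rowsB k; exists i.
have [l [c vcE]] := ray_collinear_basis_row freeA lineA unitB rays_rowsB
  (primitive_neq0 (primv rho)).
have [t vtE] := intrmx_eq_scale_row unitB vcE.
have [i i_s vi] := rowsB l; rewrite -vi in vtE.
case: (primv rho t (v i) vtE) => t1.
  by move: vtE; rewrite t1 scale1r => /injv rho_i; rewrite rho_i i_s in rho_s.
by exists i; rewrite vtE t1 scaleN1r.
Qed.

Lemma linesum_filt_delta r (k : I -> 'I_r) rho i :
  linesum_filt C (fun j rho => (j == k rho)%:R) rho i =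
  if i <= 0 then 1%:M else if i == 1 then delta_mx (k rho) (k rho) else 0.
Proof.
rewrite /linesum_filt; case: ifP => [i_le0 | i_gt0].
  rewrite -diag_const_mx; congr diag_mx.
  by apply/rowP => j; rewrite !mxE (le_trans i_le0).
case: eqP => [-> | i_ne1].
  apply/matrixP => p q; rewrite !mxE.
  by case: (p =P k rho) => [->|_]; rewrite ?mul0rn // eq_sym.
apply/matrixP => p q; rewrite !mxE.
have -> : (i <= (p == k rho)%:R) = false.
  by case: (p == k rho); apply/negbTE; rewrite -ltNge /=; move: i_ne1 i_gt0; lia.
by rewrite mul0rn.
Qed.

Lemma tangent_splits_signed_basis (B : 'M[int]_n) :
  B \in unitmx -> (forall rho, exists k, v rho = row k B \/ v rho = - row k B) ->
  tangent_splits v C.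
Proof.
move=> unitB /fin_all_exists[k rowk].
have unitBC := intrmx_unit C unitB.
exists n, (fun j rho => (j == k rho)%:R), (invmx (intrmx B)); split.
- by rewrite row_free_unit unitmx_inv.
- by rewrite row_full_unit unitmx_inv.
move=> rho i; rewrite linesum_filt_delta /tangent_filt.
case: ifP => _.
  by rewrite mul1mx submx1 sub1mx row_full_unit unitmx_inv.
case: ifP => _; last by rewrite mul0mx submx_refl.
have rowkE : intrmx (row (k rho) B) *m invmx (intrmx B) = 'e_(k rho).
  by rewrite map_row -row_mul mulmxV // row1.
apply/eqmxP; apply: eqmx_trans (eqmxMr _ (genmxE _)) _.
apply: eqmx_trans (eqmx_delta_rV_mx _ _).
case: (rowk rho) => ->; first by rewrite rowkE.
by rewrite (map_mxN (intr : {rmorphism int -> C})) mulNmx rowkE; apply: eqmx_opp.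
Qed.

End SplitTangent.

Theorem proposition2p6 (C : numClosedFieldType) (n : nat) (I : finType)
  (v : I -> 'rV[int]_n) (D : {set {set I}}) :
  smooth_fan v D ->
  (exists s, s \in D /\ #|s| = n) ->
  (tangent_splits v C <->
   (forall s, s \in D -> #|s| = n ->
      forall rho, rho \notin s -> exists rho', rho' \in s /\ v rho = - v rho')).
Proof.
move=> [[injv primv] _ _ unimod _] [s0 [s0D card_s0]]; split.
  move=> [r [a [A [freeA _ filtA]]]] s sD card_s.
  apply: (linesum_rays_opposite_cone_rays (a := a)) injv primv (unimod s sD)
    card_s freeA _ => rho.
  by have := filtA rho 1; rewrite /tangent_filt /= !(eqmxMr _ (genmxE _)).
move=> opposite.
have [B [unitB _ rowsB]] := unimodular_basis_rows (unimod s0 s0D) card_s0.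
apply: tangent_splits_signed_basis unitB _ => rho.
have [/rowsB[k ->] | rho_s0] := boolP (rho \in s0); first by exists k; left.
have [rho' [rho's0 ->]] := opposite s0 s0D card_s0 rho rho_s0.
by have [k ->] := rowsB rho' rho's0; exists k; right.
Qed.
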